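(* Consider a single flow on a route of $n$ links $\mathcal{T}_0,\dots,\mathcal{T}_{n-1}$ under the $\phi$-hop interference model, $0\le\phi\le n-1$, with slice widths $w_0=w_1=\dots=w_{n-1}$ all equal. Then the Ordered Round-Robin policy $ORR$ is both throughput-optimal and deadline-optimal.
   Context: Time is slotted. Under $\phi$-hop interference on the line, distinct links $\mathcal{T}_j,\mathcal{T}_{j'}$ cannot be active in the same slot if $|j-j'|\le\phi$. Each link $\mathcal{T}_j$ has a slice of width $w_j$ for the flow with a FCFS queue; the flow has deterministic fluid arrival rate $\lambda>0$ per slot. Units arriving in slot $t$ are available at the first link from slot $t+1$; an activated link serves $\min\{Q,w_j\}$ from its queue of size $Q$; units served at a link in slot $t$ are available at the next link from slot $t+1$; a packet's delay is the slot in which it is served at the last link minus its arrival slot. Policies are admissible (respect interference, work-conserving) and cyclic with period $K^\pi$; $\bar{\mu}^\pi_e=\frac1{K^\pi}\sum_{t=0}^{K^\pi-1}\mu^\pi_e(t)$ is the activation rate of link $e$. Throughput: $\lambda^*(\pi,\boldsymbol{w})=\min_e\bar{\mu}^\pi_e w_e$; $\pi$ is throughput-optimal for $\boldsymbol{w}$ if $\lambda^*(\pi,\boldsymbol{w})\ge\lambda^*(\pi',\boldsymbol{w})$ for all cyclic admissible $\pi'$. Deadlines: $\tau^*(\pi,\boldsymbol{w},\lambda)$ is the maximum packet delay under $\pi$, $\tau^*(\pi)=\lim_{\lambda\to0}\tau^*(\pi,\boldsymbol{w},\lambda)$, and $\pi$ is deadline-optimal if $\tau^*(\pi)\le\tau^*(\pi')$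 for all cyclic admissible $\pi'$. The $ORR$ policy has period $\phi+1$ and in slot $t$ activates every link $\mathcal{T}_j$ with $j\equiv t\pmod{\phi+1}$. *)

From HB Require Import structures.
From mathcomp Require Import all_boot all_order all_algebra.
From mathcomp Require Import all_classical all_reals all_analysis.
Set Implicit Arguments. Unset Strict Implicit. Unset Printing Implicit Defensive.
Import Order.TTheory GRing.Theory Num.Theory.
Import numFieldNormedType.Exports.
Local Open Scope classical_set_scope.
Local Open Scope ring_scope.

(* Links of the route are indexed by 0, ..., n-1 (nat indices; indices >= n
   are irrelevant). *)
Record policy := Policy { pol_period : nat; pol_act : nat -> nat -> bool }.

Definition active (pi : policy) (t j : nat) : bool :=
  pol_act pi (t %% pol_period pi)%N j.

(* Admissible: positive period, and phi-hop interference respected: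
   two distinct links T_j, T_j' active in the same slot satisfy |j-j'| > phi. *)
Definition admissible (n phi : nat) (pi : policy) : Prop :=
  (0 < pol_period pi)%N /\
  forall t j j', (j < n)%N -> (j' < n)%N -> j != j' ->
    active pi t j -> active pi t j' -> (phi < (j - j') + (j' - j))%N.

Definition ORR (phi : nat) : policy :=
  Policy phi.+1 (fun t j => (j %% phi.+1 == t %% phi.+1)%N).

Section Model.
Variable R : realType.

Definition mubar (pi : policy) (e : nat) : R :=
  (\sum_(t < pol_period pi) (pol_act pi t e : nat))%:R / (pol_period pi)%:R.

(* lambda^*(pi, w) = min_{e < n} mubar_e * w_e  (n > 0 assumed by users) *)
Definition lamstar (n : nat) (pi : policy) (w : nat -> R) : R :=
  \big[Order.min/ mubar pi 0 * w 0%N]_(e < n) (mubar pi e * w e).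

Definition throughput_optimal (n phi : nat) (w : nat -> R) (pi : policy) : Prop :=
  forall pi', admissible n phi pi' -> lamstar n pi' w <= lamstar n pi w.

(* Fluid dynamics.  [cum pi w lam t j] = total amount served by link j in
   slots 0, ..., t-1.  Queue of link j at the start of slot t: arrivals
   (lam per slot) of slots < t minus served, for j = 0; served by link j-1
   in slots < t minus served by link j, for j > 0.  An activated link serves
   min(Q, w_j) (work-conserving). *)
Definition queue (lam : R) (c : nat -> R) (t j : nat) : R :=
  (if j is j'.+1 then c j' else lam * t%:R) - c j.

Fixpoint cum (pi : policy) (w : nat -> R) (lam : R) (t : nat) : nat -> R :=
  match t with
  | 0 => fun _ => 0
  | t'.+1 => let c := cum pi w lam t' in
      fun j => c j + (if active pi t' j then Num.min (queue lam c t' j) (w j) else 0)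
  end.

(* Unit x > 0 (cumulative arrival index)
   arrives in slot t with lam*t < x <= lam*(t+1); it is served at the last
   link T_{n-1} in the first slot s with cum (s+1) (n-1) >= x; its delay is
   s - t. *)
Definition delays (n : nat) (pi : policy) (w : nat -> R) (lam : R) : set (\bar R) :=
  [set d | exists x : R, exists t s : nat,
     [/\ 0 < x, lam * t%:R < x & x <= lam * t.+1%:R] /\
     [/\ x <= cum pi w lam s.+1 n.-1,
         (forall s', (s' < s)%N -> cum pi w lam s'.+1 n.-1 < x) &
         d = (s%:R - t%:R)%:E]]
  `|` [set d | d = +oo%E /\ exists x : R, 0 < x /\ forall s, cum pi w lam s.+1 n.-1 < x].

Definition maxdelay (n : nat) (pi : policy) (w : nat -> R) (lam : R) : \bar R :=
  ereal_sup (delays n pi w lam).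

Definition taustar (n : nat) (pi : policy) (w : nat -> R) : \bar R :=
  lim (maxdelay n pi w lam @[lam --> 0^'+]).

Definition deadline_optimal (n phi : nat) (w : nat -> R) (pi : policy) : Prop :=
  forall pi', admissible n phi pi' -> (taustar n pi w <= taustar n pi' w)%E.

End Model.

From HB Require Import structures.
From mathcomp Require Import all_boot all_order all_algebra.
From mathcomp Require Import all_classical all_reals all_analysis.
From mathcomp Require Import zify.
Import Order.TTheory GRing.Theory Num.Theory.
Set Implicit Arguments. Unset Strict Implicit. Unset Printing Implicit Defensive.

(* When the arrival rate is small enough, every activated link empties its
   queue, so the fluid system is driven by the slot-indexed counts [passed]
   below and the packet delays no longer depend on the load.  Among the links
   T_0, ..., T_phi at most one is active in any slot.  Hence one of them is
   active in at most a 1/(phi+1) fraction of the slots, which bounds the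
   throughput; and in any window of phi consecutive slots one of them stays
   idle, so traffic reaching that link just before the window waits phi slots
   on top of its n hops: every admissible policy has delay at least n + phi,
   which ORR attains. *)

(* [passed pi s j] is the number of arrival slots whose traffic has reached
   link [j] before slot [s], when activated links always empty their queue. *)
Fixpoint passed (pi : policy) (s : nat) : nat -> nat :=
  if s is s'.+1 then fun j =>
    if j is j'.+1 then
      (if active pi s' j' then passed pi s' j' else passed pi s' j)
    else s
  else fun _ => 0.

Section Passed.
Variable pi : policy.
Local Notation K := (pol_period pi).

Lemma passed0 s : passed pi s 0 = s.
Proof. by case: s. Qed.

Lemma passedSS s j : passed pi s.+1 j.+1 =
  if active pi s j then passed pi s j else passed pi s j.+1.
Proof. by []. Qed.

Lemma passed_leS s j : passed pi s j.+1 <= passed pi s j.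
Proof.
elim: s j => [|s IH] [|j] //=.
  by case: ifP => _; rewrite ?passed0 // (leq_trans (IH 0)) ?passed0.
by case: ifP => _; case: ifP => _ //; apply: leq_trans (IH j).
Qed.

Lemma passed_le s j : passed pi s j <= s.
Proof. by elim: j => [|j IH]; rewrite ?passed0 // (leq_trans (passed_leS _ _)). Qed.

Lemma passed_nondecreasing j : {homo passed pi ^~ j : s s' / s <= s'}.
Proof.
apply: homo_leq => [//|? ? ?|s]; first exact: leq_trans.
by case: j => [|j] /=; rewrite ?passed0 //; case: ifP => _ //; apply: passed_leS.
Qed.

Lemma passed_gt_active s j t : t < passed pi s j.+1 ->
  exists2 u, u < s & active pi u j && (t < passed pi u j).
Proof.
elim: s => [//|s IH] /=; case: ifP => act h; first by exists s => //; rewrite act.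
by have [u us uP] := IH h; exists u => //; rewrite ltnS ltnW.
Qed.

(* Traffic of slot [t] cannot be served at link [k] before slot [t + k + 1],
   and link [k] then stays idle for [phi] slots. *)
Lemma passed_after_gap phi k t :
  (forall i, t + k < i <= t + k + phi -> ~~ active pi i k) ->
  forall j v, t < passed pi v j -> t + j + (if k < j then phi else 0) < v.
Proof.
move=> gap; elim=> [v|j IH v]; first by rewrite passed0 ltn0 !addn0.
move=> /passed_gt_active [u uv /andP [actu]] /IH.
case: (ltngtP k j) => [kj|jk|kj].
- by rewrite ltnS (ltnW kj); lia.
- by rewrite ltnS (leqNgt k) jk /=; lia.
- subst k; rewrite ltnSn addn0 => tju.
  have [uj|] := leqP u (t + j + phi); last lia.
  by have := gap u; rewrite actu tju uj => /(_ isT).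
Qed.

Lemma active_mod t t' j : t = t' %[mod K] -> active pi t j = active pi t' j.
Proof. by rewrite /active => ->. Qed.

Definition periodically_active (n : nat) :=
  forall j, j < n -> forall s, exists2 u, s <= u < s + K & active pi u j.

Lemma cyclic_periodically_active n : 0 < K ->
  (forall j, j < n -> exists t, active pi t j) -> periodically_active n.
Proof.
move=> K0 act j jn s; have [t0 t0act] := act j jn.
have sK : s <= t0 + s * K by rewrite (leq_trans (leq_pmulr s K0)) // leq_addl.
exists (s + (t0 + s * K - s) %% K).
  by rewrite leq_addr ltn_add2l ltn_mod.
rewrite (active_mod _ (_ : _ = t0 %[mod K])) //.
by rewrite modnDmr subnKC // [t0 + _]addnC modnMDl.
Qed.

Lemma passed_lower n j s : periodically_active n -> j <= n ->
  s - j * K <= passed pi s j.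
Proof.
move=> pa; elim: j s => [s _|j IH s jn]; first by rewrite mul0n subn0 passed0.
have [|Ks] := leqP s (j.+1 * K); first by rewrite -subn_eq0 => /eqP->.
have [u /andP [Ksu uKs] act] := pa j jn (s - K).
have served : passed pi u.+1 j.+1 <= passed pi s j.+1.
  by apply: passed_nondecreasing; lia.
rewrite passedSS act in served.
have := IH u (ltnW jn); rewrite mulSn in Ks *; lia.
Qed.

End Passed.

Section Interference.
Variables (n phi : nat) (pi : policy).
Hypotheses (adm : admissible n phi pi) (phi_lt_n : phi < n).

Lemma sum_active_interfering_le1 t : \sum_(e < phi.+1) (active pi t e : nat) <= 1.
Proof.
have [e0 act0|idle] := pickP (fun e : 'I_phi.+1 => active pi t e); last first.
  by rewrite big1 // => e _; rewrite idle.
rewrite (bigD1 e0) //= act0 big1 // => e eNe0.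
case: (boolP (active pi t e)) => // act; exfalso.
have lt_n (i : 'I_phi.+1) : i < n := leq_trans (ltn_ord i) phi_lt_n.
have := adm.2 t e e0 (lt_n e) (lt_n e0) eNe0 act act0.
by have := ltn_ord e; have := ltn_ord e0; lia.
Qed.

Lemma exists_rarely_active_link (S : seq nat) :
  exists2 k, k <= phi & phi.+1 * \sum_(t <- S) (active pi t k : nat) <= size S.
Proof.
pose count_act (k : 'I_phi.+1) := \sum_(t <- S) (active pi t k : nat).
have [k _ kmin] := @arg_minnP _ ord0 predT count_act isT.
exists k; first by rewrite -ltnS.
apply: leq_trans (_ : \sum_(e < phi.+1) count_act e <= _).
  by rewrite -[X in X * _]card_ord -sum_nat_const leq_sum.
rewrite exchange_big -sum1_size leq_sum // => t _.
exact: sum_active_interfering_le1.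
Qed.

Lemma exists_idle_link c :
  exists2 k, k <= phi & forall i, c < i <= c + phi -> ~~ active pi i k.
Proof.
have [k kphi rare] := exists_rarely_active_link (index_iota c.+1 (c + phi).+1).
exists k => // i /andP [ci icphi].
have : \sum_(t <- index_iota c.+1 (c + phi).+1) (active pi t k : nat) == 0.
  move: rare; rewrite size_iota subSS addKn.
  by case: (\sum_(_ <- _) _) => // m; rewrite mulnS; lia.
rewrite sum_nat_seq_eq0 => /allP /(_ i); rewrite mem_index_iota ci ltnS icphi.
by rewrite eqn0Ngt lt0b; apply.
Qed.

End Interference.

Lemma ORR_active phi t j : active (ORR phi) t j = (j == t %[mod phi.+1]).
Proof. by rewrite /active /= modn_mod. Qed.

Lemma ORR_admissible n phi : admissible n phi (ORR phi).
Proof.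
split=> // t j j' _ _ jNj'; rewrite !ORR_active => /eqP jt /eqP j't.
have jj' : j = j' %[mod phi.+1] by rewrite jt j't.
have far a b : a < b -> a = b %[mod phi.+1] -> phi < b - a.
  move=> ab /eqP; rewrite eq_sym eqn_mod_dvd ?(ltnW ab) // => /dvdn_leq.
  by rewrite subn_gt0; apply.
case: (ltngtP j j') jNj' => // lt _.
- by have := far _ _ lt jj'; lia.
- by have := far _ _ lt (esym jj'); lia.
Qed.

Lemma ORR_passed phi t j :
  t < passed (ORR phi) ((t %/ phi.+1).+1 * phi.+1 + j).+1 j.+1.
Proof.
elim: j => [|j IH]; rewrite passedSS ORR_active.
  by rewrite addn0 modnMl mod0n eqxx passed0 ltn_ceil.
by rewrite modnMDl eqxx addnS.
Qed.

Lemma ORR_activity phi e : \sum_(t < phi.+1) (pol_act (ORR phi) t e : nat) = 1.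
Proof.
rewrite (bigD1 (Ordinal (ltn_pmod e (ltn0Sn phi)))) //= modn_mod eqxx big1 // => t tNe.
rewrite (modn_small (ltn_ord t)).
by case: (e %% phi.+1 =P t) => // et; move: tNe; rewrite -val_eqE /= et eqxx.
Qed.

Local Open Scope ring_scope.

Section FluidModel.
Variables (R : realType) (pi : policy) (w : nat -> R).
Local Notation K := (pol_period pi).

Definition slot_delays (n : nat) : set (\bar R) :=
  [set d | exists t s : nat, [/\ (t < passed pi s.+1 n)%N,
     (forall s', (s' < s)%N -> (passed pi s'.+1 n <= t)%N) & d = (s%:R - t%:R)%:E]].

(* A queue never holds more than [n * K] slots of traffic, so under [w_large]
   every activation empties it. *)
Section SmallLoad.
Variables (lam : R) (n : nat).
Hypotheses (pa : periodically_active pi n) (lam_gt0 : 0 < lam)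
  (w_large : forall j, (j < n)%N -> lam * (n * K)%:R <= w j).

Lemma cum_passed s j : (j < n)%N -> cum pi w lam s j = lam * (passed pi s j.+1)%:R.
Proof.
elim: s j => [|s IH] j jn; first by rewrite /= mulr0.
have queue_passed : queue lam (cum pi w lam s) s j =
    lam * (passed pi s j - passed pi s j.+1)%:R.
  rewrite /queue natrB ?passed_leS // mulrBr IH //.
  by case: j jn => [|j] jn; rewrite ?passed0 //= IH 1?ltnW.
rewrite /= IH //; case: ifP => act; last by rewrite addr0.
rewrite queue_passed min_l; first by rewrite -mulrDr -natrD subnKC ?passed_leS.
apply: le_trans (w_large jn); rewrite ler_pM2l // ler_nat.
have := passed_le pi s j; have := passed_lower s pa jn.
have : (j.+1 * K <= n * K)%N by rewrite leq_mul2r jn orbT.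
lia.
Qed.

Lemma delays_slot_delays : (0 < n)%N -> delays n pi w lam = slot_delays n.
Proof.
move=> n0.
have cum_last s : cum pi w lam s n.-1 = lam * (passed pi s n)%:R.
  by rewrite cum_passed ?prednK // ltn_predL.
rewrite /delays /slot_delays; apply/seteqP; split => d.
- case=> [[x [t [s [[x0 xl xu] [xc xmin ->]]]]] | [_ [x [x0 never]]]].
  + exists t, s; split => //.
    * rewrite cum_last in xc.
      by rewrite -(ltr_nat R) -(ltr_pM2l lam_gt0) (lt_le_trans xl).
    * move=> s' ss'; have := xmin s' ss'; rewrite cum_last => h.
      by rewrite -ltnS -(ltr_nat R) -(ltr_pM2l lam_gt0) (lt_le_trans h).
  + exfalso.
    pose N := Num.truncn (x / lam).
    have xN : x < lam * N.+1%:R by rewrite mulrC -ltr_pdivrMr // truncnS_gt.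
    have := never (N + n * K)%N; rewrite cum_last; apply/negP; rewrite -leNgt.
    apply: le_trans (ltW xN) _; rewrite ler_pM2l // ler_nat.
    have := passed_lower (N + n * K).+1 pa (leqnn n); lia.
- case=> t [s [ts smin ->]]; left.
  exists (lam * t.+1%:R), t, s; split; split => //.
  + by rewrite mulr_gt0.
  + by rewrite ltr_pM2l // ltr_nat.
  + by rewrite cum_last ler_pM2l // ler_nat.
  + by move=> s' ss'; rewrite cum_last ltr_pM2l // ltr_nat ltnS smin.
Qed.

End SmallLoad.

Lemma taustar_slot_delays n c : (0 < n)%N -> (0 < K)%N -> periodically_active pi n ->
  0 < c -> (forall j, (j < n)%N -> c <= w j) ->
  taustar n pi w = ereal_sup (slot_delays n).
Proof.
move=> n0 K0 pa c0 wc.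
have nK0 : 0 < (n * K)%:R :> R by rewrite ltr0n muln_gt0 n0.
rewrite /taustar; apply: (@lim_near_cst _ (@ereal_hausdorff R)).
near=> lam.
have lam0 : 0 < lam by near: lam; exact: nbhs_right_gt.
have lam_small : lam < c / (n * K)%:R.
  by near: lam; apply: nbhs_right_lt; rewrite divr_gt0.
rewrite /maxdelay (delays_slot_delays pa lam0) // => j jn.
by rewrite -ler_pdivlMr // (le_trans (ltW lam_small)) // ler_pM2r ?invr_gt0 ?wc.
Unshelve. all: end_near.
Qed.

Lemma taustar_unserved n j0 : (j0 < n)%N -> (forall t, ~~ active pi t j0) ->
  (forall j, (j < n)%N -> 0 < w j) -> taustar n pi w = +oo%E.
Proof.
move=> j0n idle w_gt0.
have cum0 lam s j : (j0 <= j < n)%N -> cum pi w lam s j = 0.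
  elim: s j => [//|s IH] j /andP [j0j jn] /=.
  rewrite IH ?j0j // add0r.
  have [->|j0Nj] := eqVneq j j0; first by rewrite (negbTE (idle s)).
  have {j0j j0Nj} : (j0 < j)%N by rewrite ltn_neqAle eq_sym j0Nj.
  case: ifP => // _; case: j jn => // j jn j0j.
  by rewrite /queue !IH ?subr0 ?min_l ?ltW ?w_gt0 //; apply/andP; split; lia.
rewrite /taustar; apply: (@lim_near_cst _ (@ereal_hausdorff R)).
apply: nearW => lam; rewrite /maxdelay; apply: ereal_supy.
right; split => //; exists 1; split => // s.
by rewrite cum0 ?ltr01 //; apply/andP; split; lia.
Qed.

End FluidModel.

Section Delays.
Variables (R : realType) (n phi : nat).

Lemma slot_delays_ORR_le : (0 < n)%N ->
  (ereal_sup (@slot_delays R (ORR phi) n) <= (n + phi)%:R%:E)%E.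
Proof.
move=> n0; apply: ge_ereal_sup => _ [t [s [ts smin ->]]].
pose s0 := ((t %/ phi.+1).+1 * phi.+1)%N.
have served : (t < passed (ORR phi) (s0 + n.-1).+1 n)%N.
  by have := ORR_passed phi t n.-1; rewrite prednK.
have s_le : (s <= s0 + n.-1)%N.
  by rewrite leqNgt; apply/negP => /smin; rewrite leqNgt served.
have s0_le : (s0 <= t + phi.+1)%N by rewrite /s0 mulSn addnC leq_add2r leq_divM.
have t_le : (t <= s)%N by have := passed_le (ORR phi) s.+1 n; lia.
rewrite lee_fin lerBlDl -natrD ler_nat; lia.
Qed.

Lemma slot_delays_sup_ge pi : admissible n phi pi -> (phi < n)%N ->
  periodically_active pi n ->
  ((n + phi)%:R%:E <= ereal_sup (@slot_delays R pi n))%E.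
Proof.
move=> adm phin pa.
have [k kphi idle] := exists_idle_link adm phin phi.
pose t := (phi - k)%N.
have gap i : (t + k < i <= t + k + phi)%N -> ~~ active pi i k.
  by rewrite /t subnK // => /idle.
have served : exists s, (t < passed pi s.+1 n)%N.
  exists (t + n * pol_period pi)%N.
  by have := passed_lower (t + n * pol_period pi).+1 pa (leqnn n); lia.
have [s ts smin] := ex_minnP served.
have late := passed_after_gap gap ts.
rewrite (_ : (k < n)%N) in late; last lia.
apply: le_ereal_sup_tmp; exists (s%:R - t%:R)%:E.
  exists t, s; split => // s' s's; rewrite leqNgt; apply/negP => /smin; lia.
rewrite lee_fin lerBrDl -natrD ler_nat; lia.
Qed.

End Delays.

Section Throughput.
Variables (R : realType) (n : nat) (w : nat -> R).

Lemma lamstar_le_mubar pi e : (e < n)%N -> lamstar n pi w <= mubar R pi e * w e.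
Proof. by move=> en; rewrite /lamstar (bigD1 (Ordinal en)) //= ge_min lexx. Qed.

Lemma mubar_ORR phi e : mubar R (ORR phi) e = phi.+1%:R^-1.
Proof. by rewrite /mubar ORR_activity mul1r. Qed.

Hypothesis w_const : forall e, (e < n)%N -> w e = w 0%N.

Lemma lamstar_ORR phi : lamstar n (ORR phi) w = phi.+1%:R^-1 * w 0%N.
Proof.
rewrite /lamstar mubar_ORR; elim/big_rec: _ => // e x _ ->.
by rewrite mubar_ORR w_const // minxx.
Qed.

Lemma lamstar_admissible_le phi pi : admissible n phi pi -> (phi < n)%N ->
  0 <= w 0%N -> lamstar n pi w <= phi.+1%:R^-1 * w 0%N.
Proof.
move=> adm phin w0.
have [k kphi rare] := exists_rarely_active_link adm phin (index_iota 0 (pol_period pi)).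
have kn : (k < n)%N by apply: leq_ltn_trans phin.
apply: le_trans (lamstar_le_mubar pi kn) _; rewrite w_const // ler_wpM2r //.
have act_k : \sum_(t < pol_period pi) (pol_act pi t k : nat) =
    \sum_(t < pol_period pi) (active pi t k : nat).
  by apply: eq_bigr => t _; rewrite /active modn_small.
rewrite size_iota subn0 big_mkord -act_k in rare.
rewrite /mubar ler_pdivrMr ?ltr0n ?adm.1 // mulrC ler_pdivlMr // -natrM ler_nat.
by rewrite mulnC.
Qed.

End Throughput.

Unset Implicit Arguments. Set Strict Implicit. Set Printing Implicit Defensive.

Theorem corollary3 (R : realType) (n phi : nat) (w : nat -> R) :
  (0 < n)%N -> (phi <= n - 1)%N ->
  (forall j, (j < n)%N -> 0 < w j) ->
  (forall j j', (j < n)%N -> (j' < n)%N -> w j = w j') ->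
  [/\ admissible n phi (ORR phi),
      throughput_optimal n phi w (ORR phi) &
      deadline_optimal n phi w (ORR phi)].
Proof.
move=> n0 phin w_gt0 w_eq.
have phi_lt_n : (phi < n)%N by lia.
have w_const e : (e < n)%N -> w e = w 0%N by move=> en; apply: w_eq.
have w_ge e : (e < n)%N -> w 0%N <= w e by move=> en; rewrite w_const.
have w0 := w_gt0 0%N n0.
split; first exact: ORR_admissible.
- by move=> pi adm; rewrite lamstar_ORR // lamstar_admissible_le // ltW.
- move=> pi adm.
  have ORR_pa : periodically_active (ORR phi) n.
    by apply: cyclic_periodically_active => // j _; exists j; rewrite ORR_active.
  rewrite (taustar_slot_delays n0 _ ORR_pa w0 w_ge) //.
  apply: le_trans (slot_delays_ORR_le _ _ n0) _.
  have [all_served|] := pselect (forall j, (j < n)%N -> exists t, active pi t j).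
    have pa := cyclic_periodically_active adm.1 all_served.
    by rewrite (taustar_slot_delays n0 adm.1 pa w0 w_ge) slot_delays_sup_ge.
  move=> /existsNP [j0 /not_implyP [j0n /forallNP idle]].
  have never t : ~~ active pi t j0 by apply/negP.
  by rewrite (taustar_unserved j0n never w_gt0) leey.
Qed.
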